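(* Consider binary operation $\wedge$ on $\{0,1\}$ defined by $1\wedge1=1\wedge0=0\wedge0=1$ and $0\wedge1=0$ (i.e. $a\wedge b=a^b$ with $0^0=1$). For $n\ge0$, the number of complete bracketings of the word $0\wedge0\wedge\cdots\wedge0$ with $n+1$ zeroes (i.e. full binary parenthesizations) whose value is $1$ equals the number of walks $0=y_0,y_1,\dots,y_n=2$ with steps $y_i-y_{i-1}\in\{-2,-1,1,2\}$ and $y_i\ge1$ for all $1\le i\le n$. *)

From HB Require Import structures.
From mathcomp Require Import all_boot all_order all_algebra.
Import GRing.Theory Num.Theory.
Set Implicit Arguments. Unset Strict Implicit. Unset Printing Implicit Defensive.

(* Full binary bracketings of the word 0 ^ 0 ^ ... ^ 0: binary trees whose
   leaves are all the letter 0. *)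
Inductive btree := Leaf | Node of btree & btree.

Fixpoint btree_eq (s t : btree) : bool :=
  match s, t with
  | Leaf, Leaf => true
  | Node a b, Node c d => btree_eq a c && btree_eq b d
  | _, _ => false
  end.

Lemma btree_eqP : Equality.axiom btree_eq.
Proof.
elim=> [|a IHa b IHb] [|c d] /=; try by constructor.
case: (IHa c) => [->|nac]; last by right; case.
case: (IHb d) => [->|nbd]; last by right; case.
by left.
Qed.
HB.instance Definition _ := hasDecEq.Build btree btree_eqP.

Fixpoint leaves (t : btree) : nat :=
  match t with Leaf => 1 | Node a b => leaves a + leaves b end.

(* a /\ b := a^b with 0^0 = 1, on {0,1} encoded as bool (true = 1):
   1^1 = 1^0 = 0^0 = 1, 0^1 = 0. *)
Definition wedge (a b : bool) : bool := a || ~~ b.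

Fixpoint bval (t : btree) : bool :=
  match t with Leaf => false | Node a b => wedge (bval a) (bval b) end.

Definition step (i : 'I_4) : int :=
  match val i with 0 => (-2)%R | 1 => (-1)%R | 2 => 1%R | _ => 2%R end.

Definition pos n (w : n.-tuple 'I_4) (k : nat) : int :=
  (\sum_(i <- take k w) step i)%R.

Definition good_walk n (w : n.-tuple 'I_4) : bool :=
  (pos w n == 2%R) && [forall i : 'I_n, (1 <= pos w i.+1)%R].

From mathcomp Require Import all_boot all_algebra.
From mathcomp Require Import zify ring.
Set Implicit Arguments. Unset Strict Implicit. Unset Printing Implicit Defensive.
Import GRing.Theory Num.Theory.

(* Let A, B and C = A + B count the bracketings with value 0, with value 1 and
   all bracketings, z marking (number of leaves - 1).  A bracketing (l r) has
   value 0 iff l has value 0 and r has value 1, so A = 1 + z A B and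
   C = 1 + z C^2; eliminating C gives C = A^2 + z A^3 and
   Q(A) = z^2 A^4 + z A^3 - z A^2 - A + 1 = 0.
   Let G_b count the walks ending at height b.  Splitting off the last step,
   G_b = z (G_(b-2) + G_(b-1) + G_(b+1) + G_(b+2)) for b >= 1, with G_(-1) = 0
   and G_0 = 1, and these equations determine G_b coefficientwise.  The
   sequence U_(b+1) with U_0 = 0, U_1 = 1, U_(k+2) = x U_(k+1) + y U_k for
   x = z A^3 (1 + z A) and y = z A^2 solves them, because t^2 - x t - y divides
   the kernel z (1 + t + t^3 + t^4) - t^2 modulo Q(A).  Hence
   G_2 = U_3 = x^2 + y = C - A = B.  All identities are used modulo z^(N+1)
   in Z[z]. *)

Lemma flatten_map_uniq (S T : eqType) (key : T -> S) (h : S -> seq T) (s : seq S) :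
    uniq s -> {in s, forall x, uniq (h x)} ->
    {in s, forall x y, y \in h x -> key y = x} ->
  uniq (flatten [seq h x | x <- s]).
Proof.
elim: s => //= x s IH /andP[xNs s_uniq] h_uniq h_key.
have sub_s x' : x' \in s -> x' \in x :: s by rewrite inE => ->; rewrite orbT.
rewrite cat_uniq h_uniq ?mem_head //=.
rewrite IH //; last 2 first.
- by move=> x' /sub_s; apply: h_uniq.
- by move=> x' /sub_s; apply: h_key.
rewrite andbT; apply/hasPn => y /flatten_mapP[x' x's yhx'].
apply/negP => yhx; move/negP: xNs; apply.
by rewrite -(h_key x (mem_head _ _) y yhx) (h_key x' (sub_s _ x's) y yhx').
Qed.

Lemma count_allpairs_and (S T U : Type) (f : S -> T -> U) (P : pred U)
    (a : pred S) (b : pred T) s t :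
    (forall x y, P (f x y) = a x && b y) ->
  count P [seq f x y | x <- s, y <- t] = count a s * count b t.
Proof.
move=> fP; elim: s => //= x s IH; rewrite count_cat IH count_map mulnDl.
congr (_ + _); rewrite (eq_count (a2 := fun y => a x && b y)) => [|y]; last by rewrite /= fP.
by case: (a x); rewrite ?mul1n ?mul0n ?count_pred0.
Qed.

Lemma card_rcons (T : finType) n (A : {set n.+1.-tuple T}) :
  #|A| = \sum_(x : T) #|[set w : n.-tuple T | [tuple of rcons w x] \in A]|.
Proof.
pose rc (p : T * n.-tuple T) := [tuple of rcons p.2 p.1].
pose split (w : n.+1.-tuple T) := (last (thead w) (behead w),
                                   [tuple of belast (thead w) (behead w)]).
have splitK : cancel split rc.
  move=> w; apply: val_inj; rewrite /= -lastI.
  exact: (esym (congr1 val (tuple_eta w))).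
have rc_inj : injective rc.
  move=> [x s] [y t] /(congr1 val)/rcons_inj [/val_inj-> ->] //.
have rcK : cancel rc split := inj_can_sym splitK rc_inj.
rewrite -sum1_card (reindex rc); last by exists split => [p|w] _; [apply: rcK | apply: splitK].
rewrite (eq_bigr (fun x => \sum_(w | rc (x, w) \in A) 1)%N); last first.
  by move=> x _; rewrite -sum1_card; apply: eq_bigl => w; rewrite inE.
by rewrite pair_big_dep.
Qed.

Lemma forall_ord_recr n (P : pred nat) :
  [forall i : 'I_n.+1, P i] = [forall i : 'I_n, P i] && P n.
Proof. by rewrite -!(big_andE predT) big_ord_recr. Qed.

Fixpoint trees_fuel (f k : nat) : seq btree :=
  if f is f'.+1 then
    if k == 1 then [:: Leaf] else
    flatten [seq [seq Node l r | l <- trees_fuel f' i, r <- trees_fuel f' (k - i)]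
            | i <- iota 1 k.-1]
  else [::].

Definition trees (k : nat) : seq btree := trees_fuel k k.

Lemma leaves_gt0 t : 0 < leaves t.
Proof. by elim: t => //= l IHl r _; rewrite ltn_addr. Qed.

Lemma mem_trees_fuel f k t : k <= f -> (t \in trees_fuel f k) = (leaves t == k).
Proof.
elim: f k t => [|f IH] k t k_le; first by case: k k_le => //; rewrite eqn0Ngt leaves_gt0.
rewrite /=; case: eqP => [-> | k_neq1].
  case: t => [|l r] //=; rewrite inE; apply/eqP/eqP => // sum1.
  by have := leaves_gt0 l; have := leaves_gt0 r; lia.
apply/flatten_mapP/eqP => [[i] | t_leaves].
  rewrite mem_iota => /andP[i_gt0 i_lt] /allpairsP[[l r] [/= lP rP ->]] /=.
  move: lP rP; rewrite !IH; [move=> /eqP-> /eqP->| |]; lia.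
case: t t_leaves => [|l r] /= t_leaves; first by case: k_neq1.
have := leaves_gt0 l; have := leaves_gt0 r => r_gt0 l_gt0.
exists (leaves l); first by rewrite mem_iota; lia.
by apply: allpairs_f; rewrite IH; lia.
Qed.

Lemma uniq_trees_fuel f k : k <= f -> uniq (trees_fuel f k).
Proof.
elim: f k => [|f IH] k k_le //=; case: eqP => // _.
apply: (@flatten_map_uniq _ _ (fun t => if t is Node l _ then leaves l else 0)).
- exact: iota_uniq.
- move=> i; rewrite mem_iota => i_bnd; apply: allpairs_uniq; rewrite ?IH //; try lia.
  by move=> [l r] [l' r'] _ _ [-> ->].
- move=> i; rewrite mem_iota => i_bnd _ /allpairsP[[l r] [/= lP _ ->]].
  by apply/eqP; rewrite -(@mem_trees_fuel f) //; lia.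
Qed.

Lemma mem_trees k t : (t \in trees k) = (leaves t == k).
Proof. exact: mem_trees_fuel. Qed.

Lemma uniq_trees k : uniq (trees k).
Proof. exact: uniq_trees_fuel. Qed.

Lemma perm_trees_fuel f k : k <= f -> perm_eq (trees_fuel f k) (trees k).
Proof.
move=> k_le; apply: uniq_perm; rewrite ?uniq_trees_fuel ?uniq_trees //.
by move=> t; rewrite mem_trees mem_trees_fuel.
Qed.

Lemma trees_fuel_Node f k :
  trees_fuel f.+1 k.+2 =
  flatten [seq [seq Node l r | l <- trees_fuel f i, r <- trees_fuel f (k.+2 - i)]
          | i <- iota 1 k.+1].
Proof. by []. Qed.

Lemma count_trees_Node (P : pred btree) k :
  count P (trees k.+2) =
  \sum_(j < k.+1) count P [seq Node l r | l <- trees j.+1, r <- trees (k - j).+1].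
Proof.
rewrite /trees trees_fuel_Node count_flatten sumnE -[iota 1 k.+1]/(index_iota 1 k.+2).
rewrite !big_map big_add1 big_mkord; apply: eq_bigr => j _.
have j_le : j <= k by rewrite -ltnS.
rewrite subSS subSn //; move: P; apply/permP.
by apply: perm_allpairs; apply: perm_trees_fuel; lia.
Qed.

Definition ntrees0 n := count (predC bval) (trees n.+1).
Definition ntrees1 n := count bval (trees n.+1).

Lemma ntrees0_0 : ntrees0 0 = 1. Proof. by []. Qed.

Lemma ntrees0S n : ntrees0 n.+1 = \sum_(j < n.+1) ntrees0 j * ntrees1 (n - j).
Proof.
rewrite /ntrees0 count_trees_Node; apply: eq_bigr => j _.
by apply: count_allpairs_and => l r; rewrite /= /wedge negb_or negbK.
Qed.

Lemma size_treesS n :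
  size (trees n.+2) = \sum_(j < n.+1) size (trees j.+1) * size (trees (n - j).+1).
Proof.
rewrite -count_predT count_trees_Node; apply: eq_bigr => j _.
by rewrite -!count_predT; apply: count_allpairs_and.
Qed.

Lemma size_trees n : size (trees n.+1) = ntrees0 n + ntrees1 n.
Proof. by rewrite addnC count_predC. Qed.

Local Open Scope ring_scope.

Section VanishUpto.
Variables (R : nzRingType) (N : nat).

Definition vanish_upto (p : {poly R}) := forall k, (k <= N)%N -> p`_k = 0.

Lemma vanish_uptoD p q : vanish_upto p -> vanish_upto q -> vanish_upto (p + q).
Proof. by move=> p0 q0 k k_le; rewrite coefD p0 ?q0 ?addr0. Qed.

Lemma vanish_uptoN p : vanish_upto p -> vanish_upto (- p).
Proof. by move=> p0 k k_le; rewrite coefN p0 ?oppr0. Qed.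

Lemma vanish_uptoB p q : vanish_upto p -> vanish_upto q -> vanish_upto (p - q).
Proof. by move=> p0 /vanish_uptoN; apply: vanish_uptoD. Qed.

Lemma vanish_uptoMl q p : vanish_upto p -> vanish_upto (q * p).
Proof.
move=> p0 k k_le; rewrite coefM big1 // => j _.
by rewrite p0 ?mulr0 // (leq_trans (leq_subr _ _)).
Qed.

Lemma vanish_upto_coef p q k : vanish_upto (p - q) -> (k <= N)%N -> p`_k = q`_k.
Proof. by move=> pq0 k_le; apply/eqP; rewrite -subr_eq0 -coefB pq0. Qed.

Lemma vanish_upto_coefXM p q k :
  vanish_upto ('X * p - q) -> (k < N)%N -> q`_k.+1 = p`_k.
Proof. by move=> pq0 k_lt; rewrite -(vanish_upto_coef pq0 k_lt) coefXM. Qed.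

Lemma vanish_upto_convolution (u v w : nat -> R) :
    w 0%N = 1 -> (forall n, w n.+1 = \sum_(j < n.+1) u j * v (n - j)%N) ->
  vanish_upto (\poly_(i < N.+1) w i - 1 - 'X * (\poly_(i < N.+1) u i * \poly_(i < N.+1) v i)).
Proof.
move=> w0 wS [|k] k_le; rewrite !coefB coefXM coef1 coef_poly ltnS k_le /=.
  by rewrite w0 !subrr.
rewrite subr0 coefM wS; apply/eqP; rewrite subr_eq0; apply/eqP/eq_bigr => j _.
have j_le : (j <= N)%N by have := ltn_ord j; lia.
have kj_le : (k - j <= N)%N by lia.
by rewrite !coef_poly !ltnS j_le kj_le.
Qed.

End VanishUpto.

Section Lucas.
Variables (R : comPzRingType) (x y : R).

Fixpoint lucas (k : nat) : R :=
  match k with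
  | 0 => 0
  | 1 => 1
  | (j.+1 as k').+1 => x * lucas k' + y * lucas j
  end.

Lemma lucasSS k : lucas k.+2 = x * lucas k.+1 + y * lucas k.
Proof. by []. Qed.

(* The coefficients are the remainder of the kernel z (1 + t + t^3 + t^4) - t^2
   modulo t^2 - x t - y. *)
Lemma lucas_kernel z k :
  z * (lucas k.+4 + lucas k.+3 + lucas k.+1 + lucas k) - lucas k.+2 =
  (z * (1 + y + x ^+ 2 + 2 * x * y + x ^+ 3) - x) * lucas k.+1 +
  (z * (1 + x * y + x ^+ 2 * y + y ^+ 2) - y) * lucas k.
Proof. rewrite !lucasSS; ring. Qed.

End Lucas.

Lemma lucas_coef0 (R : comNzRingType) (x y : {poly R}) k :
  x`_0 = 0 -> y`_0 = 0 -> (lucas x y k.+2)`_0 = 0.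
Proof. by move=> x0 y0; rewrite lucasSS coefD !coef0M x0 y0 !mul0r addr0. Qed.

Section WalkSeries.
Variable R : comPzRingType.
Implicit Types z a c : R.

Definition val0_poly z a := z ^+ 2 * a ^+ 4 + z * a ^+ 3 - z * a ^+ 2 - a + 1.

Definition walk_series z a := lucas (z * a ^+ 3 * (1 + z * a)) (z * a ^+ 2).

(* The cofactors are the quotients of the two coefficients in [lucas_kernel]
   by [val0_poly z a]. *)
Lemma walk_series_kernel z a k :
  let W := walk_series z a in
  z * (W k.+4 + W k.+3 + W k.+1 + W k) - W k.+2 =
  ((z + z * a + z * a ^+ 2 + 2 * z ^+ 2 * a ^+ 2 + 2 * z ^+ 2 * a ^+ 3
    + z ^+ 2 * a ^+ 4 + z ^+ 3 * a ^+ 4 + 2 * z ^+ 3 * a ^+ 5 + z ^+ 3 * a ^+ 6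
    + z ^+ 4 * a ^+ 6 + 2 * z ^+ 4 * a ^+ 7 + z ^+ 5 * a ^+ 8) * W k.+1
   + (z + z * a + z ^+ 2 * a ^+ 2 + z ^+ 2 * a ^+ 3 + z ^+ 3 * a ^+ 4
      + z ^+ 3 * a ^+ 5 + z ^+ 4 * a ^+ 6) * W k) * val0_poly z a.
Proof. by rewrite /walk_series lucas_kernel /val0_poly; ring. Qed.

Lemma val0_poly_tree_eqns z a c :
  val0_poly z a =
  (z * a * (a + c) - 1) * (a - 1 - z * (a * (c - a))) - z * a ^+ 2 * (c - 1 - z * (c * c)).
Proof. rewrite /val0_poly; ring. Qed.

Lemma walk_series3_tree_eqns z a c :
  walk_series z a 3 - (c - a) =
  (a + z * a ^+ 2 + z * a ^+ 3 + z ^+ 2 * a ^+ 4) * val0_poly z a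
  - (a * (c - 1 - z * (c * c)) - (a + c) * (a - 1 - z * (a * (c - a)))).
Proof. rewrite /walk_series /val0_poly /=; ring. Qed.

End WalkSeries.

Fixpoint nwalks (n : nat) (h : int) : nat :=
  if n is m.+1 then
    if 1 <= h then (\sum_(s < 4) nwalks m (h - step s)%R)%N else 0%N
  else (h == 0).

Lemma sum_steps (F : int -> nat) (h : int) :
  (\sum_(s < 4) F (h - step s)%R = F (h + 2)%R + F (h + 1)%R + F (h - 1)%R + F (h - 2)%R)%N.
Proof. by rewrite !big_ord_recl big_ord0 /step /= !opprK addn0 !addnA. Qed.

Definition walks n (h : int) : {set n.-tuple 'I_4} :=
  [set w | (pos w n == h) && [forall i : 'I_n, 1 <= pos w i.+1]].

Lemma pos_rcons n (w : n.-tuple 'I_4) x k :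
  pos [tuple of rcons w x] k = if (k <= n)%N then pos w k else pos w n + step x.
Proof.
rewrite /pos /= -cats1; case: leqP => [k_le | k_gt].
  by rewrite takel_cat ?size_tuple.
rewrite !take_oversize ?size_cat ?size_tuple ?addn1 // 1?ltnW //.
by rewrite big_cat big_seq1.
Qed.

Lemma rcons_walks n h (w : n.-tuple 'I_4) x :
  ([tuple of rcons w x] \in walks n.+1 h) = (1 <= h) && (w \in walks n (h - step x)).
Proof.
rewrite !inE (forall_ord_recr n (fun k => 1 <= pos [tuple of rcons w x] k.+1)).
rewrite !pos_rcons ltnn.
rewrite (eq_forallb (P2 := fun i : 'I_n => 1 <= pos w i.+1)) => [|i]; last first.
  by rewrite pos_rcons ifT //; exact: (ltn_ord i).
have [<-|ne] := eqVneq (pos w n + step x) h; first by rewrite addrK eqxx andTb andbC.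
rewrite andFb (_ : (pos w n == h - step x) = false) ?andFb ?andbF //.
by apply/eqP => e; case/eqP: ne; rewrite e subrK.
Qed.

Lemma nwalksS n h :
  nwalks n.+1 h = if 1 <= h then (\sum_(s < 4) nwalks n (h - step s)%R)%N else 0%N.
Proof. by []. Qed.

Lemma card_walks n h : #|walks n h| = nwalks n h.
Proof.
elim: n h => [|n IH] h.
  have [->|h_neq0] := eqVneq h 0.
    rewrite (_ : walks 0 0 = setT) ?cardsT ?card_tuple //.
    by apply/setP => w; rewrite !inE /pos take0 big_nil eqxx; apply/forallP => -[].
  rewrite (_ : walks 0 h = set0) ?cards0 /= ?(negbTE h_neq0) //.
  by apply/setP => w; rewrite !inE /pos take0 big_nil eq_sym (negbTE h_neq0).
rewrite card_rcons nwalksS; case: ifP => h_ge1.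
  by apply: eq_bigr => x _; rewrite -IH; apply: eq_card => w; rewrite inE rcons_walks h_ge1.
by rewrite big1 // => x _; apply: eq_card0 => w; rewrite inE rcons_walks h_ge1.
Qed.

Section WalkCoefficients.
Variables (R : comNzRingType) (N : nat) (a : {poly R}).
Hypothesis val0_poly_a : vanish_upto N (val0_poly 'X a).
Let W := walk_series 'X a.

Lemma walk_series_coef0 k : (W k.+2)`_0 = 0.
Proof. by apply: lucas_coef0; rewrite !coef0M coefX /= ?mul0r. Qed.

Lemma nwalks_coef n k : (n <= N)%N -> (nwalks n (k%:Z - 1))%:R = (W k)`_n.
Proof.
elim: n k => [|n IH] [|[|k]] n_le.
- by rewrite coef0.
- by rewrite coef1.
- by rewrite walk_series_coef0.
- by rewrite coef0.
- by rewrite coef1.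
have h_ge1 : 1 <= k.+2%:Z - 1 by lia.
rewrite nwalksS h_ge1 sum_steps.
have -> : k.+2%:Z - 1 + 2 = k.+4%:Z - 1 by lia.
have -> : k.+2%:Z - 1 + 1 = k.+3%:Z - 1 by lia.
have -> : k.+2%:Z - 1 - 1 = k.+1%:Z - 1 by lia.
have -> : k.+2%:Z - 1 - 2 = k%:Z - 1 by lia.
have kernel : vanish_upto N ('X * (W k.+4 + W k.+3 + W k.+1 + W k) - W k.+2).
  by rewrite walk_series_kernel; apply: vanish_uptoMl.
have n_le' : (n <= N)%N := ltnW n_le.
by rewrite (vanish_upto_coefXM kernel n_le) !natrD !IH // -!coefD.
Qed.

End WalkCoefficients.

Definition ntrees0_series N : {poly int} := \poly_(i < N.+1) (ntrees0 i)%:R.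
Definition trees_series N : {poly int} := \poly_(i < N.+1) (size (trees i.+1))%:R.

Lemma ntrees0_series_eqn N :
  vanish_upto N (ntrees0_series N - 1
                 - 'X * (ntrees0_series N * (trees_series N - ntrees0_series N))).
Proof.
have -> : trees_series N - ntrees0_series N = \poly_(i < N.+1) (ntrees1 i)%:R.
  apply/polyP => i; rewrite coefB !coef_poly; case: ifP; rewrite ?subrr //.
  by rewrite size_trees natrD addrC addKr.
apply: vanish_upto_convolution => [|n]; first by rewrite ntrees0_0.
by rewrite ntrees0S natr_sum; apply: eq_bigr => j _; rewrite natrM.
Qed.

Lemma trees_series_eqn N :
  vanish_upto N (trees_series N - 1 - 'X * (trees_series N * trees_series N)).
Proof.
apply: vanish_upto_convolution => [|n]; first by [].
by rewrite size_treesS natr_sum; apply: eq_bigr => j _; rewrite natrM.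
Qed.

Lemma nwalks2_ntrees1 n : nwalks n 2 = ntrees1 n.
Proof.
set A := ntrees0_series n; set C := trees_series n.
have eqA := @ntrees0_series_eqn n; have eqC := @trees_series_eqn n.
have val0_poly_A : vanish_upto n (val0_poly 'X A).
  by rewrite (val0_poly_tree_eqns _ _ C); apply: vanish_uptoB; apply: vanish_uptoMl.
have W3 : vanish_upto n (walk_series 'X A 3 - (C - A)).
  rewrite walk_series3_tree_eqns; apply: vanish_uptoB; first exact: vanish_uptoMl.
  by apply: vanish_uptoB; apply: vanish_uptoMl.
have : (nwalks n 2)%:R = (walk_series 'X A 3)`_n := nwalks_coef val0_poly_A 3 (leqnn n).
rewrite (vanish_upto_coef W3 (leqnn n)) coefB !coef_poly ltnSn size_trees natrD addrC addKr.
by move/eqP; rewrite eqr_nat => /eqP.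
Qed.

Theorem proposition5p4 (n : nat) :
  exists s : seq btree,
    [/\ uniq s,
        (forall t, t \in s <-> (leaves t = n.+1 /\ bval t = true)) &
        size s = #|[set w : n.-tuple 'I_4 | good_walk w]| ].
Proof.
exists [seq t <- trees n.+1 | bval t]; split.
- exact/filter_uniq/uniq_trees.
- move=> t; rewrite mem_filter mem_trees.
  by split => [/andP[-> /eqP ->] | [-> ->]] //; rewrite eqxx.
- rewrite size_filter -/(ntrees1 n) -nwalks2_ntrees1 -card_walks.
  by apply: eq_card => w; rewrite !inE.
Qed.
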